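(* The mixed dual estimate $\check{\Sigma}$ in the model $B(\check G) \cap M(G)$ is identical to the mixed dual estimate in the model ${\rm M}_+(G)=A(G)\cap M(G)$.
   Context: Let $G=(V,E)$ be an undirected graph on $V=\{1,\ldots,d\}$, $S$ a sample covariance matrix, $M(G)$ the Gaussian graphical model ($(\Sigma^{-1})_{ij}=0$ for $ij\notin E$), $A(G)$ the set of positive definite $\Sigma$ with $\Sigma_{ij}\ge 0$ for $ij\in E$, and ${\rm M}_+(G)=A(G)\cap M(G)$. Let $\widehat K$ be the MLE of $K=\Sigma^{-1}$ in $M(G)$, and let $\check\Sigma$ (the mixed dual estimate in ${\rm M}_+(G)$) be the minimizer of $-\log\det\Sigma+\operatorname{tr}(\Sigma\widehat K)$ over positive definite $\Sigma$ with $\Sigma_{ij}\geq 0$ for $ij\in E(G)$. Let $\check G$ be the graph whose edges are the pairs $ij$ with $\check\Sigma_{ij}\neq 0$. For a graph $H$, $B(H)$ denotes the covariance graph model of all covariance matrices with $\Sigma_{ij}=0$ for $ij\notin E(H)$. The mixed dual estimate in $B(\check G)\cap M(G)$ is obtained by first computing $\widehat K$ in $M(G)$ and then computing the dual likelihood estimate in $B(\check G)$ based on $\widehat K$ (minimizing $-\log\det\Sigma+\operatorname{tr}(\Sigma\widehat K)$ over $\Sigma\in B(\check G)$). *)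

From mathcomp Require Import all_boot all_order all_algebra.
From mathcomp Require Import reals exp.
Set Implicit Arguments. Unset Strict Implicit. Unset Printing Implicit Defensive.
Import Order.TTheory GRing.Theory Num.Theory.
Local Open Scope ring_scope.

Section Defs.
Variables (R : realType) (d : nat).

Definition posdef (A : 'M[R]_d) : Prop :=
  A^T = A /\ forall v : 'cV[R]_d, v != 0 -> 0 < (v^T *m A *m v) ord0 ord0.

Definition possemidef (A : 'M[R]_d) : Prop :=
  A^T = A /\ forall v : 'cV[R]_d, 0 <= (v^T *m A *m v) ord0 ord0.

(* an undirected graph on {1..d} = 'I_d given by a symmetric edge relation;
   only off-diagonal pairs i != j are considered as (potential) edges *)
Definition undirected (E : rel 'I_d) : Prop := forall i j, E i j = E j i.

Definition zero_pattern (E : rel 'I_d) (A : 'M[R]_d) : Prop :=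
  forall i j, i != j -> ~~ E i j -> A i j = 0.

Definition in_M (E : rel 'I_d) (Sigma : 'M[R]_d) : Prop :=
  posdef Sigma /\ zero_pattern E (invmx Sigma).

Definition in_A (E : rel 'I_d) (Sigma : 'M[R]_d) : Prop :=
  posdef Sigma /\ forall i j, i != j -> E i j -> 0 <= Sigma i j.

Definition in_B (H : rel 'I_d) (Sigma : 'M[R]_d) : Prop :=
  posdef Sigma /\ zero_pattern H Sigma.

(* Gaussian log-likelihood (up to constants) in K *)
Definition loglik (S K : 'M[R]_d) : R := ln (\det K) - \tr (S *m K).

Definition dual_obj (K Sigma : 'M[R]_d) : R := - ln (\det Sigma) + \tr (Sigma *m K).

Definition is_argmin (T : Type) (P : T -> Prop) (f : T -> R) (x : T) : Prop :=
  P x /\ forall y, P y -> f x <= f y.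

Definition is_MLE_M (E : rel 'I_d) (S Khat : 'M[R]_d) : Prop :=
  posdef Khat /\ zero_pattern E Khat /\
  forall K, posdef K -> zero_pattern E K -> loglik S K <= loglik S Khat.

Definition supp_graph (A : 'M[R]_d) : rel 'I_d :=
  fun i j => (i != j) && (A i j != 0).

End Defs.

From mathcomp Require Import all_boot all_order all_algebra.
From mathcomp Require Import reals exp.
From mathcomp Require Import complex sesquilinear spectral.
From mathcomp Require Import lra.
Import Order.TTheory GRing.Theory Num.Theory.
Local Open Scope ring_scope.
Set Implicit Arguments. Unset Strict Implicit. Unset Printing Implicit Defensive.

(* The dual objective f(Sigma) = - ln det Sigma + tr (Sigma Khat) is strictly
   convex on positive definite matrices: writing l_i > 0 for the eigenvalues of
   M^-1 X, the tangent inequality ln det X - ln det M <= tr (M^-1 X) - d is the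
   sum of the inequalities ln l_i <= l_i - 1, strict unless X = M.
   For Sigma in B(supp Scheck), the points (1 - t) Scheck + t Sigma stay in A(G)
   for small t > 0: entries where Scheck vanishes vanish along the segment, and
   positive entries of Scheck stay positive. Minimality of Scheck over A(G) and
   convexity of f then give f Scheck <= f Sigma, and strict convexity on the
   convex set B(supp Scheck) gives uniqueness. *)

Lemma invmx_mul (R : comUnitRingType) n (A B : 'M[R]_n) :
  A \in unitmx -> B \in unitmx -> invmx (A *m B) = invmx B *m invmx A.
Proof.
move=> A_unit B_unit; have AB_unit : A *m B \in unitmx by rewrite unitmx_mul A_unit.
have AB_inv : A *m B *m (invmx B *m invmx A) = 1%:M by rewrite mulmxA mulmxK // mulmxV.
by rewrite -[LHS]mulmx1 -AB_inv mulmxA mulVmx // mul1mx.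
Qed.

Lemma convex_comb_neq_left (R : numFieldType) (V : lmodType R) (a b : V) (t : R) :
  0 < t -> a != b -> (1 - t) *: a + t *: b != a.
Proof.
move=> t_gt0; apply: contra_neq; rewrite scalerBl scale1r -addrA -[X in _ = X]addr0.
by move=> /addrI /eqP; rewrite addrC subr_eq0 => /eqP /(scalerI (lt0r_neq0 t_gt0)) ->.
Qed.

Lemma exists_convex_comb_ge0 (R : realFieldType) (I : finType) (P : pred I)
    (a b : I -> R) :
  (forall i, P i -> 0 <= a i) -> (forall i, P i -> a i = 0 -> b i = 0) ->
  exists2 t, 0 < t < 1 & forall i, P i -> 0 <= (1 - t) * a i + t * b i.
Proof.
(* (1 - t) a + t b >= 0 once t <= a / (a + |b|); half the product of these
   bounds, all in (0, 1], lies below each of them. *)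
move=> a_ge0 ab0; pose g i := if 0 < a i then a i / (a i + `|b i|) else 1.
have g01 i : 0 < g i <= 1.
  rewrite /g; case: ifP => a_gt0; last by rewrite ltr01 lexx.
  have ab_gt0 : 0 < a i + `|b i| by rewrite ltr_pwDl.
  by rewrite divr_gt0 //= ler_pdivrMr // mul1r lerDl.
have g_gt0 i : 0 < g i by case/andP: (g01 i).
have g_le1 i : g i <= 1 by case/andP: (g01 i).
have prod_le1 : \prod_i g i <= 1 by apply: prodr_ile1 => i _; rewrite ltW ?g_le1.
have prod_le i : \prod_j g j <= g i.
  rewrite (bigD1 i) //= ler_piMr ?(ltW (g_gt0 i)) //.
  by apply: prodr_ile1 => j _; rewrite ltW ?g_le1.
have prod_gt0 : 0 < \prod_i g i by apply: prodr_gt0.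
exists ((\prod_i g i) / 2) => [|i Pi]; first by apply/andP; split; lra.
have := prod_le i; have [ai0|ai_neq0] := eqVneq (a i) 0.
  by rewrite ai0 ab0 // !mulr0 addr0.
have ai_gt0 : 0 < a i by rewrite lt_def ai_neq0 a_ge0.
have ab_gt0 : 0 < a i + `|b i| by rewrite ltr_pwDl.
rewrite /g ai_gt0 ler_pdivlMr // => prod_ab.
have := ler_norm (- b i); rewrite normrN; nra.
Qed.

Section Diagonalized.
Variables (F : fieldType) (n : nat) (Q : 'M[F]_n) (D : 'rV[F]_n).
Hypothesis Q_unit : Q \in unitmx.

Lemma row_unitmx_neq0 i : row i Q != 0.
Proof.
apply/eqP => rowQ0; have := congr1 (fun A : 'rV_n => A 0 i) (row_mul i Q (invmx Q)).
by rewrite rowQ0 mul0mx mulmxV // !mxE eqxx => /eqP; rewrite oner_eq0.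
Qed.

Lemma row_eigen_diag i :
  row i Q *m (invmx Q *m diag_mx D *m Q) = D 0 i *: row i Q.
Proof.
by rewrite -!row_mul !mulmxA mulmxV // mul1mx row_mul row_diag_mx -scalemxAl -rowE.
Qed.

Lemma det_conj_diag : \det (invmx Q *m diag_mx D *m Q) = \prod_i D 0 i.
Proof.
by rewrite !det_mulmx mulrC mulrA -det_mulmx mulmxV // det1 mul1r det_diag.
Qed.

Lemma trace_conj_diag : \tr (invmx Q *m diag_mx D *m Q) = \sum_i D 0 i.
Proof. by rewrite mxtrace_mulC mulmxA mulmxV // mul1mx mxtrace_diag. Qed.

End Diagonalized.

Section LogBounds.
Variable R : realType.

Lemma ln_prod (I : finType) (r : I -> R) : (forall i, 0 < r i) ->
  ln (\prod_i r i) = \sum_i ln (r i).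
Proof.
move=> r_gt0; pose lnP (s p : R) := 0 < p /\ ln p = s.
have [] : lnP (\sum_i ln (r i)) (\prod_i r i); last by [].
apply: big_rec2 => [|i s p _ [p_gt0 <-]]; first by split; [exact: ltr01 | exact: ln1].
by split; [rewrite mulr_gt0 | rewrite lnM ?posrE].
Qed.

Lemma ln_lt_subr1 (x : R) : 0 < x -> x != 1 -> ln x < x - 1.
Proof.
move=> x_gt0 x_neq1; rewrite ltrBrDl -{2}(lnK x_gt0) expR_gt1Dx //.
by rewrite ln_eq0.
Qed.

End LogBounds.

Section PosDef.
Variables (R : realType) (d : nat).
Implicit Types (A B M X : 'M[R]_d) (t : R).

Lemma posdef_row A : posdef A -> forall v : 'rV_d, v != 0 -> 0 < (v *m A *m v^T) 0 0.
Proof.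
move=> [_ A_pos] v v_neq0; have := A_pos v^T; rewrite trmxK; apply.
by apply: contraNneq v_neq0 => /(congr1 trmx); rewrite trmxK trmx0 => ->.
Qed.

Lemma posdef1 : posdef (1%:M : 'M[R]_d).
Proof.
split=> [|v v_neq0]; first by rewrite trmx1.
rewrite mulmx1 mxE; have [j vj_neq0] : exists j, v j 0 != 0.
  apply/existsP; apply: contraNT v_neq0 => /existsPn v0.
  by apply/eqP/matrixP => i k; rewrite ord1 mxE; apply/eqP/negPn/v0.
have vv_ge0 i : 0 <= v^T 0 i * v i 0 by rewrite mxE -expr2 sqr_ge0.
rewrite lt_def psumr_neq0 ?sumr_ge0 ?andbT //; apply/hasP; exists j.
  by rewrite mem_index_enum.
by rewrite mxE -expr2 lt_def sqr_ge0 andbT sqrf_eq0.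
Qed.

Lemma posdef_convex A B t : posdef A -> posdef B -> 0 <= t <= 1 ->
  posdef ((1 - t) *: A + t *: B).
Proof.
move=> [A_sym A_pos] [B_sym B_pos] /andP[t_ge0 t_le1]; split.
  by rewrite linearD !linearZ /= A_sym B_sym.
move=> v v_neq0; have := A_pos v v_neq0; have := B_pos v v_neq0.
rewrite mulmxDr mulmxDl -!scalemxAr -!scalemxAl.
move: (v^T *m A *m v) (v^T *m B *m v) => QA QB; rewrite !mxE; nra.
Qed.

Lemma posdef_unitmx A : posdef A -> A \in unitmx.
Proof.
move=> A_pd; rewrite unitmxE unitfE; apply/det0P => -[v v_neq0 vA0].
by have := posdef_row A_pd v_neq0; rewrite vA0 mul0mx mxE ltxx.
Qed.

Lemma invmx_mul_eigen_gt0 M X a (v : 'rV_d) : posdef M -> posdef X ->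
  v != 0 -> v *m (invmx M *m X) = a *: v -> 0 < a.
Proof.
move=> M_pd X_pd v_neq0 v_eigen; have M_unit := posdef_unitmx M_pd.
set u := v *m invmx M; have vE : v = u *m M by rewrite /u mulmxKV.
have u_neq0 : u != 0 by apply: contraNneq v_neq0 => u0; rewrite vE u0 mul0mx.
have uX : u *m X = a *: (u *m M) by rewrite /u -mulmxA v_eigen -vE.
have := posdef_row X_pd u_neq0; rewrite uX -!scalemxAl mxE.
by rewrite pmulr_lgt0 // posdef_row.
Qed.

End PosDef.

Section Spectral.
Variables (R : realType) (d : nat).
Local Notation C := R[i].
Local Notation toC := (real_complex R).
Local Notation diag_real l := (diag_mx (\row_i toC (l i))).
Local Open Scope sesquilinear_scope.

Lemma real_eigenvector (N : 'M[R]_d) a (w : 'rV[C]_d) : w != 0 ->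
  w *m map_mx toC N = toC a *: w -> exists2 v : 'rV[R]_d, v != 0 & v *m N = a *: v.
Proof.
move=> w_neq0 w_eigen.
have : eigenvalue (map_mx toC N) (toC a) by apply/eigenvalueP; exists w.
rewrite eigenvalue_root_char -map_char_poly fmorph_root -eigenvalue_root_char.
by move/eigenvalueP => [v v_eigen v_neq0]; exists v.
Qed.

Lemma sym_map_hermitian (A : 'M[R]_d) : A^T = A -> map_mx toC A \is hermsymmx.
Proof.
move=> A_sym; apply/is_hermitianmxP; rewrite expr0 scale1r.
apply/matrixP => i j; rewrite !mxE conj_Creal ?complex_real //.
by rewrite -{1}A_sym mxE.
Qed.

Lemma hermitian_unitary_diag (H : 'M[C]_d) : H \is hermsymmx ->
  exists V (l : 'I_d -> R), V \is unitarymx /\ H = invmx V *m diag_real l *m V.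
Proof.
move=> H_herm; have /mxOverP D_real := hermitian_spectral_diag_real H_herm.
exists (spectralmx H), (fun i => complex.Re (spectral_diag H 0 i)).
split; first exact: spectral_unitarymx.
rewrite {1}(orthomx_spectralP (hermitian_normalmx H_herm)); congr (_ *m diag_mx _ *m _).
by apply/rowP => i; rewrite mxE RRe_real.
Qed.

Lemma invmx_mul_diag_gt0 (M X : 'M[R]_d) Q l : posdef M -> posdef X -> Q \in unitmx ->
  map_mx toC (invmx M *m X) = invmx Q *m diag_real l *m Q -> forall i, 0 < l i.
Proof.
move=> M_pd X_pd Q_unit N_diag i; have := row_eigen_diag (\row_i toC (l i)) Q_unit i.
rewrite -N_diag mxE => /(real_eigenvector (row_unitmx_neq0 Q_unit i)) [v v_neq0].
exact: invmx_mul_eigen_gt0.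
Qed.

Lemma posdef_unitary_diag (A : 'M[R]_d) : posdef A -> exists V (l : 'I_d -> R),
  [/\ V \is unitarymx, map_mx toC A = invmx V *m diag_real l *m V & forall i, 0 < l i].
Proof.
move=> A_pd; have [V [l [V_unitary A_diag]]] :=
  hermitian_unitary_diag (sym_map_hermitian A_pd.1).
exists V, l; split=> //.
apply: (invmx_mul_diag_gt0 (posdef1 R d) A_pd (unitarymx_unit V_unitary)).
by rewrite invmx1 mul1mx.
Qed.

Lemma posdef_invmx_factor (M : 'M[R]_d) : posdef M ->
  exists2 S : 'M[C]_d, S \in unitmx & map_mx toC (invmx M) = S^t* *m S.
Proof.
move=> M_pd; have [V [l [V_unitary M_diag l_gt0]]] := posdef_unitary_diag M_pd.
have V_unit := unitarymx_unit V_unitary.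
pose Ds := diag_real (fun i => (Num.sqrt (l i))^-1).
have Ds_herm : Ds^t* = Ds.
  rewrite tr_diag_mx map_diag_mx; congr diag_mx; apply/rowP => i.
  by rewrite !mxE; apply/CrealP; rewrite complex_real.
have DsDsD : Ds *m Ds *m diag_real l = 1%:M.
  rewrite !mulmx_diag -diag_const_mx; congr diag_mx; apply/rowP => i.
  rewrite !mxE -!rmorphM -(rmorph1 toC) -invfM -expr2 sqr_sqrtr ?ltW //.
  by rewrite mulVf ?gt_eqF.
have SSM : (Ds *m V)^t* *m (Ds *m V) *m map_mx toC M = 1%:M.
  rewrite trmx_mul map_mxM Ds_herm -invmx_unitary // M_diag !mulmxA mulmxK //.
  by rewrite -!mulmxA (mulmxA Ds) (mulmxA (Ds *m Ds)) DsDsD mul1mx mulVmx.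
have Minv : map_mx toC (invmx M) = (Ds *m V)^t* *m (Ds *m V).
  by rewrite map_invmx -[LHS]mul1mx -SSM mulmxK // map_unitmx posdef_unitmx.
exists (Ds *m V) => //.
have : map_mx toC (invmx M) \in unitmx by rewrite map_unitmx unitmx_inv posdef_unitmx.
by rewrite Minv unitmx_mul => /andP[].
Qed.

Lemma invmx_mul_posdef_diag (M X : 'M[R]_d) : posdef M -> posdef X ->
  exists Q (l : 'I_d -> R), [/\ Q \in unitmx,
    map_mx toC (invmx M *m X) = invmx Q *m diag_real l *m Q & forall i, 0 < l i].
Proof.
(* With M^-1 = S^* S, the matrix M^-1 X is similar to the hermitian S X S^*. *)
move=> M_pd X_pd; have [S S_unit Minv] := posdef_invmx_factor M_pd.
have T_unit : S^t* \in unitmx by rewrite map_unitmx unitmx_tr.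
have X_herm := sym_map_hermitian X_pd.1.
have H_herm : S *m map_mx toC X *m S^t* \is hermsymmx.
  apply/is_hermitianmxP; rewrite expr0 scale1r !trmx_mul !map_mxM trmxCK mulmxA.
  by have := is_hermitianmxP _ _ _ X_herm; rewrite expr0 scale1r => <-.
have [V [l [V_unitary H_diag]]] := hermitian_unitary_diag H_herm.
have V_unit := unitarymx_unit V_unitary.
pose Q := V *m invmx (S^t*).
have Q_unit : Q \in unitmx by rewrite unitmx_mul V_unit unitmx_inv.
have N_diag : map_mx toC (invmx M *m X) = invmx Q *m diag_real l *m Q.
  rewrite invmx_mul ?unitmx_inv // invmxK map_mxM Minv !mulmxA.
  rewrite -(mulmxA (S^t*) (invmx V)) -(mulmxA (S^t*) (invmx V *m _)) -H_diag.
  by rewrite mulmxA mulmxK // mulmxA.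
by exists Q, l; split=> //; apply: invmx_mul_diag_gt0 M_pd X_pd Q_unit N_diag.
Qed.

Lemma posdef_generalized_eigen (M X : 'M[R]_d) : posdef M -> posdef X ->
  exists l : 'I_d -> R, [/\ forall i, 0 < l i, \det (invmx M *m X) = \prod_i l i,
    \tr (invmx M *m X) = \sum_i l i & (forall i, l i = 1) -> X = M].
Proof.
move=> M_pd X_pd; have [Q [l [Q_unit N_diag l_gt0]]] := invmx_mul_posdef_diag M_pd X_pd.
exists l; split=> //.
- apply: complexI; rewrite -det_map_mx N_diag det_conj_diag // rmorph_prod.
  by apply: eq_bigr => i _; rewrite mxE.
- apply: complexI; rewrite -trace_map_mx N_diag trace_conj_diag // raddf_sum.
  by apply: eq_bigr => i _; rewrite mxE.
move=> l1; have : map_mx toC (invmx M *m X) = 1%:M.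
  rewrite N_diag; have -> : \row_i toC (l i) = const_mx 1.
    by apply/rowP => i; rewrite !mxE l1.
  by rewrite diag_const_mx mulmx1 mulVmx.
rewrite -(map_mx1 toC) => /map_mx_inj N1.
by rewrite -(mulKVmx (posdef_unitmx M_pd) X) N1 mulmx1.
Qed.

End Spectral.

Section LogDet.
Variables (R : realType) (d : nat).
Implicit Types (A B M X : 'M[R]_d) (t : R).

Lemma posdef_det_gt0 A : posdef A -> 0 < \det A.
Proof.
move=> A_pd; have [l [l_gt0 detA _ _]] := posdef_generalized_eigen (posdef1 R d) A_pd.
by move: detA; rewrite invmx1 mul1mx => ->; apply: prodr_gt0.
Qed.

Lemma logdet_tangent_lt M X : posdef M -> posdef X -> X != M ->
  ln (\det X) - ln (\det M) < \tr (invmx M *m X) - d%:R.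
Proof.
move=> M_pd X_pd X_neqM.
have [l [l_gt0 detN trN l1]] := posdef_generalized_eigen M_pd X_pd.
have -> : ln (\det X) - ln (\det M) = \sum_i ln (l i).
  rewrite -ln_prod // -detN det_mulmx det_inv mulrC.
  by rewrite -ln_div ?posrE ?posdef_det_gt0.
have -> : \tr (invmx M *m X) - d%:R = \sum_i (l i - 1).
  by rewrite trN sumrB sumr_const card_ord.
have [i li_neq1] : exists i, l i != 1.
  apply/existsP; apply: contraNT X_neqM => /existsPn l_eq1.
  by apply/eqP/l1 => i; apply/eqP/negPn/l_eq1.
rewrite (bigD1 i) //= [ltRHS](bigD1 i) //=; apply: ltr_leD; first exact: ln_lt_subr1.
apply: ler_sum => j _; have [->|lj_neq1] := eqVneq (l j) 1; first by rewrite ln1 subrr.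
exact/ltW/ln_lt_subr1.
Qed.

Lemma logdet_strict_concave A B t : posdef A -> posdef B -> 0 < t < 1 -> A != B ->
  (1 - t) * ln (\det A) + t * ln (\det B) < ln (\det ((1 - t) *: A + t *: B)).
Proof.
move=> A_pd B_pd /andP[t_gt0 t_lt1] A_neqB; set M := (1 - t) *: A + t *: B.
have M_pd : posdef M by apply: posdef_convex; rewrite ?ltW.
have A_neqM : A != M by rewrite eq_sym convex_comb_neq_left.
have B_neqM : B != M.
  (* M = (1 - (1 - t)) *: B + (1 - t) *: A *)
  rewrite eq_sym /M addrC -[t in t *: B](subKr 1).
  by rewrite convex_comb_neq_left ?subr_gt0 // eq_sym.
have M_trace : (1 - t) * \tr (invmx M *m A) + t * \tr (invmx M *m B) = d%:R.
  rewrite -!mxtraceZ -mxtraceD !scalemxAr -mulmxDr mulVmx ?posdef_unitmx //.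
  by rewrite mxtrace1.
have t'_gt0 : 0 < 1 - t by rewrite subr_gt0.
have := logdet_tangent_lt M_pd A_pd A_neqM; rewrite -(ltr_pM2l t'_gt0).
have := logdet_tangent_lt M_pd B_pd B_neqM; rewrite -(ltr_pM2l t_gt0).
nra.
Qed.

Lemma dual_obj_strict_convex K A B t : posdef A -> posdef B -> 0 < t < 1 -> A != B ->
  dual_obj K ((1 - t) *: A + t *: B) < (1 - t) * dual_obj K A + t * dual_obj K B.
Proof.
move=> A_pd B_pd t01 A_neqB; have := logdet_strict_concave A_pd B_pd t01 A_neqB.
rewrite /dual_obj mulmxDl -!scalemxAl mxtraceD !mxtraceZ; lra.
Qed.

Lemma dual_obj_argmin_unique K (P : 'M[R]_d -> Prop) A B :
  (forall A, P A -> posdef A) ->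
  (forall A B t, P A -> P B -> 0 < t < 1 -> P ((1 - t) *: A + t *: B)) ->
  is_argmin P (dual_obj K) A -> is_argmin P (dual_obj K) B -> A = B.
Proof.
move=> P_pd P_convex [PA A_min] [PB B_min]; apply/eqP/negP => /negP A_neqB.
have half01 : 0 < (2^-1 : R) < 1 by rewrite invr_gt0 invf_lt1 ?ltr0n ?ltr1n.
have := dual_obj_strict_convex K (P_pd _ PA) (P_pd _ PB) half01 A_neqB.
have := A_min _ (P_convex _ _ _ PA PB half01); have := A_min _ PB; have := B_min _ PA.
lra.
Qed.

End LogDet.

Section SupportGraph.
Variables (R : realType) (d : nat).
Implicit Types (A Sigma : 'M[R]_d) (t : R).

Lemma in_B_supp_graph A : posdef A -> in_B (supp_graph A) A.
Proof. by move=> A_pd; split=> // i j ij; rewrite /supp_graph ij negbK => /eqP. Qed.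

Lemma supp_graph_zero A Sigma i j : in_B (supp_graph A) Sigma -> i != j ->
  A i j = 0 -> Sigma i j = 0.
Proof.
by move=> [_ Sigma0] ij Aij0; apply: Sigma0 => //; rewrite /supp_graph ij Aij0 eqxx.
Qed.

Lemma in_B_convex H A B t : in_B H A -> in_B H B -> 0 < t < 1 ->
  in_B H ((1 - t) *: A + t *: B).
Proof.
move=> [A_pd A0] [B_pd B0] /andP[t_gt0 t_lt1]; split.
  by apply: posdef_convex; rewrite ?ltW.
by move=> i j ij Hij; rewrite !mxE A0 ?B0 // !mulr0 addr0.
Qed.

Lemma convex_comb_in_A E A Sigma : in_A E A -> in_B (supp_graph A) Sigma ->
  exists2 t, 0 < t < 1 & in_A E ((1 - t) *: A + t *: Sigma).
Proof.
move=> [A_pd A_ge0] Sigma_B; pose edge (p : 'I_d * 'I_d) := (p.1 != p.2) && E p.1 p.2.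
have [||t t01 comb_ge0] := exists_convex_comb_ge0 (P := edge)
    (a := fun p => A p.1 p.2) (b := fun p => Sigma p.1 p.2).
- by move=> [i j] /andP[ij Eij]; apply: A_ge0.
- by move=> [i j] /andP[ij _]; apply: supp_graph_zero.
exists t => //; split.
  by case/andP: t01 => t_gt0 t_lt1; apply: (posdef_convex A_pd Sigma_B.1); rewrite ?ltW.
by move=> i j ij Eij; rewrite !mxE; apply: (comb_ge0 (i, j)); rewrite /edge ij.
Qed.

Lemma dual_obj_le_convex_comb K (P : 'M[R]_d -> Prop) A Sigma t :
  is_argmin P (dual_obj K) A -> posdef A -> posdef Sigma -> 0 < t < 1 ->
  P ((1 - t) *: A + t *: Sigma) -> dual_obj K A <= dual_obj K Sigma.
Proof.
move=> [_ A_min] A_pd Sigma_pd t01 P_comb; have [->//|A_neq] := eqVneq A Sigma.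
have := dual_obj_strict_convex K A_pd Sigma_pd t01 A_neq; have := A_min _ P_comb.
case/andP: t01 => t_gt0 _; rewrite -(ler_pM2l t_gt0); nra.
Qed.

End SupportGraph.

Unset Implicit Arguments.

Theorem corollary5p2 (R : realType) (d : nat) (E : rel 'I_d) (S Khat Scheck : 'M[R]_d) :
  undirected E ->
  possemidef S ->
  is_MLE_M E S Khat ->
  is_argmin (in_A E) (dual_obj Khat) Scheck ->
  is_argmin (in_B (supp_graph Scheck)) (dual_obj Khat) Scheck /\
  (forall Sigma, is_argmin (in_B (supp_graph Scheck)) (dual_obj Khat) Sigma ->
     Sigma = Scheck).
Proof.
(* Only the minimality of Scheck over A(G) is used: the conclusion holds for
   any Khat, whether or not it is the MLE of S. *)
move=> _ _ _ Scheck_min; have [[Scheck_pd _] _] := Scheck_min.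
have Scheck_minB : is_argmin (in_B (supp_graph Scheck)) (dual_obj Khat) Scheck.
  split=> [|Sigma Sigma_B]; first exact: in_B_supp_graph.
  have [t t01 comb_A] := convex_comb_in_A Scheck_min.1 Sigma_B.
  exact: dual_obj_le_convex_comb Scheck_min Scheck_pd Sigma_B.1 t01 comb_A.
split=> // Sigma Sigma_min.
apply: (dual_obj_argmin_unique _ _ Sigma_min Scheck_minB) => [A []//|A B t].
exact: in_B_convex.
Qed.
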